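(* Let $L$ be a bounded distributive lattice and $f\colon L^n\to L$ an inf-homogeneous and g-comonotone supremal aggregation function. Then $f$ is a Sugeno integral, i.e. $f=\mathsf{Su}_m$ for some $L$-valued capacity $m$ on $[n]$.
   Context: $[n]=\{1,\dots,n\}$. An aggregation function is a monotone $f\colon L^n\to L$ with $f(0,\dots,0)=0$, $f(1,\dots,1)=1$. An $L$-valued capacity is $m\colon2^{[n]}\to L$, monotone, $m(\emptyset)=0$, $m([n])=1$; $\mathsf{Su}_m(\mathbf x)=\bigvee_{I\subseteq[n]}\big(m(I)\wedge\bigwedge_{i\in I}x_i\big)$ (empty meet $=1$). For $c\in L$, $\mathbf c=(c,\dots,c)$; $f$ is inf-homogeneous if $f(\mathbf c\wedge\mathbf x)=c\wedge f(\mathbf x)$ for all $\mathbf x\in L^n,c\in L$. $\mathbf x,\mathbf y$ are g-comonotone if for all $i,j$: $(x_i\vee y_i)\wedge(x_j\vee y_j)=(x_i\wedge x_j)\vee(y_i\wedge y_j)$; $f$ is g-comonotone supremal if $f(\mathbf x\vee\mathbf y)=f(\mathbf x)\vee f(\mathbf y)$ for all g-comonotone $\mathbf x,\mathbf y$. *)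

From mathcomp Require Import all_boot all_order.
Set Implicit Arguments. Unset Strict Implicit. Unset Printing Implicit Defensive.
Import Order.TTheory.
Local Open Scope order_scope.

Section Defs.
Context {disp : Order.disp_t} {L : tbDistrLatticeType disp} {n : nat}.

Definition cst (c : L) : 'I_n -> L := fun _ => c.

Definition aggregation (f : ('I_n -> L) -> L) : Prop :=
  (forall x y : 'I_n -> L, (forall i, x i <= y i) -> f x <= f y) /\
  f (cst \bot) = \bot /\ f (cst \top) = \top.

Definition capacity (m : {set 'I_n} -> L) : Prop :=
  (forall I J : {set 'I_n}, I \subset J -> m I <= m J) /\
  m set0 = \bot /\ m setT = \top.

Definition sugeno (m : {set 'I_n} -> L) (x : 'I_n -> L) : L :=
  \join_(I : {set 'I_n}) (m I `&` \meet_(i in I) x i).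

Definition inf_homogeneous (f : ('I_n -> L) -> L) : Prop :=
  forall (x : 'I_n -> L) (c : L), f (fun i => c `&` x i) = c `&` f x.

Definition g_comonotone (x y : 'I_n -> L) : Prop :=
  forall i j : 'I_n,
    (x i `|` y i) `&` (x j `|` y j) = (x i `&` x j) `|` (y i `&` y j).

Definition g_comonotone_supremal (f : ('I_n -> L) -> L) : Prop :=
  forall x y : 'I_n -> L, g_comonotone x y ->
    f (fun i => x i `|` y i) = f x `|` f y.
End Defs.

(* Put m(I) := f(1_I).  Inf-homogeneity and monotonicity give m(I) /\ meet_(i in I) x_i
   = f(c /\ 1_I) <= f(x) for c := meet_(i in I) x_i, hence Su_m <= f.  Conversely, a
   constant vector is g-comonotone with every vector, so f(c \/ y) <= c \/ f(y); this yields
   the median bound f(x) <= f(x[k:=0]) \/ (x_k /\ f(x[k:=1])).  Since Su_m is monotone and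
   c /\ Su_m(y) <= Su_m(c /\ y), this reduces f <= Su_m to Boolean vectors one coordinate at
   a time, and f(1_I) = m(I) <= Su_m(1_I). *)
From mathcomp Require Import all_boot all_order.
Import Order.TTheory.
Local Open Scope order_scope.

Section SugenoIntegral.
Context {disp : Order.disp_t} {L : tbDistrLatticeType disp} {n : nat}.
Implicit Types (x y : 'I_n -> L) (f g : ('I_n -> L) -> L) (m : {set 'I_n} -> L).

Definition monotone f := forall x y, (forall i, x i <= y i) -> f x <= f y.

Definition indicator (I : {set 'I_n}) : 'I_n -> L :=
  fun i => if i \in I then \top else \bot.

Definition update x (k : 'I_n) (v : L) : 'I_n -> L :=
  fun i => if i == k then v else x i.

Lemma le_indicator (I J : {set 'I_n}) :
  I \subset J -> forall i, indicator I i <= indicator J i.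
Proof.
move=> /subsetP sIJ i; rewrite /indicator.
by case: ifP => [/sIJ ->|_]; rewrite ?lexx ?le0x.
Qed.

Lemma sugeno_monotone m : monotone (sugeno m).
Proof.
move=> x y lexy; apply/joinsP => I _; apply: (joins_min (j := I)) => //.
by rewrite leI2 //; apply/meetsP => i iI; apply: le_trans (lexy i); exact: meets_inf.
Qed.

Lemma meet_sugeno_le m c x :
  c `&` sugeno m x <= sugeno m (fun i => c `&` x i).
Proof.
rewrite /sugeno; elim/big_rec2: _ => [|I y z _ le_zy]; first by rewrite meetx0.
rewrite meetUr leU2 // meetCA leI2 //.
by apply/meetsP => i iI; rewrite leI2 ?meets_inf.
Qed.

Lemma sugeno_indicator_ge m I : m I <= sugeno m (indicator I).
Proof.
apply: (joins_min (j := I)) => //.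
by rewrite lexI lexx /=; apply/meetsP => i iI; rewrite /indicator iI.
Qed.

Lemma g_comonotone_cst c x : g_comonotone (cst c) x.
Proof. by move=> i j; rewrite /cst meetxx joinIr. Qed.

Section BooleanReduction.
Variables f g : ('I_n -> L) -> L.
Hypotheses (f_mono : monotone f) (g_mono : monotone g).
Hypothesis g_meet : forall c x, c `&` g x <= g (fun i => c `&` x i).
Hypothesis f_median :
  forall x k, f x <= f (update x k \bot) `|` (x k `&` f (update x k \top)).
Hypothesis le_fg_indicator : forall I, f (indicator I) <= g (indicator I).

Lemma le_fg_boolean x : (forall i, x i = \bot \/ x i = \top) -> f x <= g x.
Proof.
move=> xB; pose I := [set i | x i == \top].
have xI i : x i = indicator I i.
  by rewrite /indicator inE; case: eqP => // xiNtop; case: (xB i).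
have le_x_I i : x i <= indicator I i by rewrite xI.
have le_I_x i : indicator I i <= x i by rewrite xI.
by apply: le_trans (f_mono _ _ le_x_I) _; apply: le_trans (g_mono _ _ le_I_x).
Qed.

Lemma le_fg_boolean_outside (s : seq 'I_n) x :
  (forall i, i \notin s -> x i = \bot \/ x i = \top) -> f x <= g x.
Proof.
elim: s x => [|k s IHs] x xB; first by apply: le_fg_boolean => i; exact: xB.
have updB v : v = \bot \/ v = \top ->
    forall i, i \notin s -> update x k v i = \bot \/ update x k v i = \top.
  move=> vB i iNs; rewrite /update; case: eqP => // /eqP ik.
  by apply: xB; rewrite inE negb_or ik.
apply: le_trans (f_median x k) _; rewrite leUx; apply/andP; split.
  apply: le_trans (IHs _ (updB _ (or_introl erefl))) (g_mono _ _ _) => i.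
  by rewrite /update; case: eqP => _; rewrite ?le0x.
apply: le_trans (leI2 (lexx _) (IHs _ (updB _ (or_intror erefl)))) _.
apply: le_trans (g_meet _ _) (g_mono _ _ _) => i.
by rewrite /update; case: eqP => [->|_]; rewrite ?meetx1 ?leIr.
Qed.

Lemma le_fg x : f x <= g x.
Proof. by apply: (le_fg_boolean_outside (enum 'I_n)) => i; rewrite mem_enum. Qed.

End BooleanReduction.

Section AggregationFunction.
Variable f : ('I_n -> L) -> L.
Hypotheses (f_agg : aggregation f) (f_hom : inf_homogeneous f).

Let f_mono : monotone f. Proof. by case: f_agg. Qed.

Definition capacity_of (I : {set 'I_n}) : L := f (indicator I).

Lemma capacity_of_capacity : capacity capacity_of.
Proof.
have [_ [f0 f1]] := f_agg; split; [|split].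
- by move=> I J sIJ; apply/f_mono/le_indicator.
- by apply/le_anti; rewrite le0x -f0 f_mono // => i; rewrite /indicator inE.
- by apply/le_anti; rewrite lex1 -f1 f_mono // => i; rewrite /indicator inE.
Qed.

Lemma sugeno_capacity_of_le x : sugeno capacity_of x <= f x.
Proof.
apply/joinsP => I _; rewrite meetC /capacity_of -f_hom; apply: f_mono => i.
rewrite /indicator; case: ifP => iI; last by rewrite meetx0 le0x.
by rewrite meetx1 meets_inf.
Qed.

Lemma f_cst_le c : f (cst c) <= c.
Proof.
have [_ [_ f1]] := f_agg.
by rewrite -[leRHS]meetx1 -f1 -f_hom; apply: f_mono => i; rewrite /cst meetx1.
Qed.

Hypothesis f_sup : g_comonotone_supremal f.

Lemma f_join_cst_le c x : f (fun i => c `|` x i) <= c `|` f x.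
Proof.
by rewrite [leLHS](f_sup _ _ (g_comonotone_cst c x)) leU2 ?f_cst_le.
Qed.

Lemma f_median_le x k :
  f x <= f (update x k \bot) `|` (x k `&` f (update x k \top)).
Proof.
have le_join : f x <= x k `|` f (update x k \bot).
  apply: le_trans (f_join_cst_le _ _); apply: f_mono => i; rewrite /update.
  by case: eqP => [->|_]; rewrite ?joinx0 ?leUr.
have le_top : f x <= f (update x k \top).
  by apply: f_mono => i; rewrite /update; case: eqP => _; rewrite ?lex1.
have le_bot_top : f (update x k \bot) <= f (update x k \top).
  by apply: f_mono => i; rewrite /update; case: eqP => _; rewrite ?lex1 ?le0x.
have : f x <= (x k `|` f (update x k \bot)) `&` f (update x k \top).
  by rewrite lexI le_join le_top.
by rewrite meetUl (meet_idPl le_bot_top) joinC.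
Qed.

Lemma f_eq_sugeno x : f x = sugeno capacity_of x.
Proof.
apply/le_anti; rewrite sugeno_capacity_of_le andbT.
apply: (le_fg f (sugeno capacity_of) f_mono (sugeno_monotone _)
          (meet_sugeno_le _) f_median_le) => I.
exact: sugeno_indicator_ge.
Qed.

End AggregationFunction.
End SugenoIntegral.

Theorem corollary1 (disp : Order.disp_t) (L : tbDistrLatticeType disp) (n : nat)
  (f : ('I_n -> L) -> L) :
  aggregation f -> inf_homogeneous f -> g_comonotone_supremal f ->
  exists m : {set 'I_n} -> L, capacity m /\ forall x, f x = sugeno m x.
Proof.
move=> f_agg f_hom f_sup; exists (capacity_of f); split.
  exact: capacity_of_capacity.
exact: f_eq_sugeno.
Qed.
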